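(* Let $(\Xi,\mathcal G,\mathbb Q)$ be a probability space, $W^1=(W^1_t)_{0\le t\le T}$ and $W^2=(W^2_t)_{0\le t\le T}$ two independent identically distributed $\mathbb R^m$-valued processes with continuous trajectories and $\mathbb E_{\mathbb Q}[\sup_{t\le T}|W^1_t|^q]<\infty$, and let $(W^{i,j}_{s,t})_{0\le s\le t\le T}$, $i,j=1,2$, be four $\mathbb R^{m\times m}$-valued continuous two-parameter processes with $\mathbb E_{\mathbb Q}[\sup_{s\le t}|W^{i,j}_{s,t}|^q]<\infty$, such that $(W^1,W^{1,1})$ is independent of $W^2$ and, for $\mathbb Q$-a.e. $\xi$, $W^{i,j}_{r,t}(\xi)=W^{i,j}_{r,s}(\xi)+W^{i,j}_{s,t}(\xi)+W^i_{r,s}(\xi)\otimes W^j_{s,t}(\xi)$ for all $i,j\in\{1,2\}$ and $0\le r\le s\le t\le T$. For $i=1,2$ and $n\ge0$ let $W^{i,n}$ be the linear interpolation of $W^i$ at the dyadic points $t^k_n=kT/2^n$: $$W^{i,n}_t(\xi)=\sum_{k=0}^{2^n-1}\Big(W^i_{t^k_n}(\xi)+W^i_{t^k_n,t^{k+1}_n}(\xi)\frac{2^n(t-t^k_n)}{T}\Big)\mathbf 1_{[t^k_n,t^{k+1}_n)}(t).$$ If for $\mathbb Q$-a.e. $\xi\in\Xi$, for all $(s,t)\in\mathcal S_2^T$, $$W^{2,1}_{s,t}(\xi)=\lim_{n\to\infty}\int_s^t\big(W^{2,n}_r(\xi)-W^{2,n}_s(\xi)\big)\otimes dW^{1,n}_r(\xi),$$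 then there exists a measurable function $\mathcal I:C([0,T];\mathbb R^m)^2\to C(\mathcal S_2^T;\mathbb R^m\otimes\mathbb R^m)$ such that $\mathbb Q\big(\{\xi\in\Xi:W^{2,1}(\xi)=\mathcal I(W^2(\xi),W^1(\xi))\}\big)=1$.
   Context: $T>0$, $m\ge1$, $q\ge 1$ fixed; $\mathcal S_2^T=\{(s,t)\in[0,T]^2:s\le t\}$; for a path $f$, $f_{s,t}=f_t-f_s$. The integral in the hypothesis is a Riemann–Stieltjes integral against the piecewise linear path $W^{1,n}$. *)

From HB Require Import structures.
From mathcomp Require Import all_boot all_order all_algebra.
From mathcomp Require Import all_classical all_reals all_analysis.
Set Implicit Arguments. Unset Strict Implicit. Unset Printing Implicit Defensive.
Import Order.TTheory GRing.Theory Num.Theory.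
Import numFieldNormedType.Exports.
Local Open Scope classical_set_scope.
Local Open Scope ring_scope.

(* Conventions: R^m is represented by row vectors 'rV[R]_m, R^m (x) R^m by
   'M[R]_m, and a (x) b := a^T *m b, so that (a (x) b) i j = a_i b_j. *)

Section Paths.
Variables (R : realType) (T : R) (m : nat).

Definition S2 : set (R * R) := [set p | 0 <= p.1 /\ p.1 <= p.2 /\ p.2 <= T].

Definition cpath := {f : R -> 'rV[R]_m | {within `[0, T], continuous f}}.

Lemma cst_cpath : {within `[0, T], continuous (fun _ : R => (0 : 'rV[R]_m))}.
Proof. apply: continuous_subspaceT => x; exact: cvg_cst. Qed.

HB.instance Definition _ := gen_eqMixin cpath.
HB.instance Definition _ := gen_choiceMixin cpath.
HB.instance Definition _ := isPointed.Build cpath (exist _ _ cst_cpath).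

Definition c2path := {g : R * R -> 'M[R]_m | {within S2, continuous g}}.

Lemma cst_c2path : {within S2, continuous (fun _ : R * R => (0 : 'M[R]_m))}.
Proof. apply: continuous_subspaceT => x; exact: cvg_cst. Qed.

HB.instance Definition _ := gen_eqMixin c2path.
HB.instance Definition _ := gen_choiceMixin c2path.
HB.instance Definition _ := isPointed.Build c2path (exist _ _ cst_c2path).

(** Borel sigma-algebras of these (separable Banach, sup-norm) spaces, i.e.
    the sigma-algebras generated by the coordinate evaluations. *)
Definition cpath_gens : set (set cpath) :=
  [set A | exists (t : R) (i : 'I_m) (B : set R),
     [/\ 0 <= t <= T, measurable B & A = (fun f : cpath => sval f t ord0 i) @^-1` B]].

Definition c2path_gens : set (set c2path) :=
  [set A | exists (p : R * R) (i j : 'I_m) (B : set R),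
     [/\ S2 p, measurable B & A = (fun g : c2path => sval g p i j) @^-1` B]].


Definition path_sigma : set (set (R -> 'rV[R]_m)) :=
  <<s [set A | exists (t : R) (i : 'I_m) (B : set R),
     [/\ 0 <= t <= T, measurable B & A = (fun f : R -> 'rV[R]_m => f t ord0 i) @^-1` B]] >>.

Definition dyad (n k : nat) : R := k%:R * T / (2 ^ n)%:R.

(** linear interpolation of f at the dyadic points of level n
    (with the convention that the interpolation at t = T equals f T,
    making it a continuous piecewise linear path on [0,T]) *)
Definition interp (n : nat) (f : R -> 'rV[R]_m) (t : R) : 'rV[R]_m :=
  if t == T then f T else
  \sum_(k < 2 ^ n)
    (if (dyad n k <= t) && (t < dyad n k.+1) then
       f (dyad n k) + ((2 ^ n)%:R * (t - dyad n k) / T) *: (f (dyad n k.+1) - f (dyad n k))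
     else 0).

End Paths.

Notation cpathM T m := (g_sigma_algebraType (@cpath_gens _ T m)).
Notation c2pathM T m := (g_sigma_algebraType (@c2path_gens _ T m)).

Section RS.
Variable R : realType.

Definition is_RS_integral (f g : R -> R) (a b I : R) : Prop :=
  forall e : R, 0 < e -> exists2 d : R, 0 < d &
    forall (N : nat) (x tau : nat -> R),
      x 0%N = a -> x N = b ->
      (forall k, (k < N)%N -> x k <= tau k <= x k.+1 /\ x k.+1 - x k < d) ->
      `| \sum_(k < N) f (tau k) * (g (x k.+1) - g (x k)) - I | < e.

End RS.

Section Proba.
Variables (d : measure_display) (Xi : measurableType d) (R : realType).

Definition rv_gens (I : Type) (D : set I) (X : I -> Xi -> R) : set (set Xi) :=
  [set A | exists i (B : set R), [/\ D i, measurable B & A = X i @^-1` B]].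

Definition indep_sigma (Q : probability Xi R) (G1 G2 : set (set Xi)) : Prop :=
  forall A B, <<s G1 >> A -> <<s G2 >> B ->
    (Q (A `&` B) = Q A * Q B)%E.

End Proba.

Section Processes.
Variables (d : measure_display) (Xi : measurableType d) (R : realType)
  (T : R) (m : nat).

Definition gens_path (W : Xi -> R -> 'rV[R]_m) : set (set Xi) :=
  rv_gens [set p : R * 'I_m | 0 <= p.1 <= T] (fun p xi => W xi p.1 ord0 p.2).

Definition gens_2path (W : Xi -> R -> R -> 'M[R]_m) : set (set Xi) :=
  rv_gens [set p : (R * R) * ('I_m * 'I_m) | S2 T p.1]
    (fun p xi => W xi p.1.1 p.1.2 p.2.1 p.2.2).

End Processes.

Definition chen (R : realType) (T : R) (m : nat)
    (Wi Wj : R -> 'rV[R]_m) (Wij : R -> R -> 'M[R]_m) : Prop :=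
  forall r s t, 0 <= r -> r <= s -> s <= t -> t <= T ->
    Wij r t = Wij r s + Wij s t + (Wi s - Wi r)^T *m (Wj t - Wj s).

From HB Require Import structures.
From mathcomp Require Import all_boot all_order all_algebra.
From mathcomp Require Import all_classical all_reals all_analysis.
From mathcomp Require Import measurable_realfun lra ring.
Import Order.TTheory GRing.Theory Num.Theory.
Import numFieldNormedType.Exports.
Local Open Scope classical_set_scope.
Local Open Scope ring_scope.
Set Implicit Arguments. Unset Strict Implicit. Unset Printing Implicit Defensive.

(* The map I is built path by path from countably many measurable operations.
   For a pair of paths (w2, w1), take at each dyadic level n the Riemann-Stieltjes
   sums of the interpolations along uniform partitions, let the mesh go to 0 and
   then n to infinity; taking upper limits keeps this total and measurable.
   Whether the result is uniformly continuous on the dyadic points of S_2^T is a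
   countable, hence measurable, condition; when it holds, extend the result
   continuously to S_2^T by approximating every point from the dyadic grid
   below, and otherwise return 0.  For almost every xi the hypothesis says that
   this double limit is W^{2,1}(xi), which is continuous, hence uniformly
   continuous on the compact set S_2^T, so the extension returns W^{2,1}(xi).
   The event is measurable because a continuous function on S_2^T is determined
   by its values at the dyadic points. *)

Definition limsupr (R : realType) (u : R^nat) : R :=
  fine (limn_esup (fun n => (u n)%:E)).

Lemma limsuprE (R : realType) (u : R^nat) (l : R) : u @ \oo --> l -> limsupr u = l.
Proof.
move=> ul; rewrite /limsupr (cvg_limn_einf_sup (l := l%:E) _).2 //.
by apply: cvg_EFin; [exact: nearW|].
Qed.

Lemma measurable_limsupr (R : realType) d (X : measurableType d) (u : nat -> X -> R) :
  (forall n, measurable_fun setT (u n)) ->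
  measurable_fun setT (fun x => limsupr (u ^~ x)).
Proof.
move=> mu; apply: measurableT_comp (fine_measurable measurableT) _.
apply: (measurable_fun_limn_esup (f := fun n x => (u n x)%:E)) => n.
exact/measurable_EFinP.
Qed.

Lemma lt_dist_split (K : numFieldType) (V : normedZmodType K) (x y z : V) e :
  `|x - y| < e / 2 -> `|y - z| < e / 2 -> `|x - z| < e.
Proof. by move=> xy yz; rewrite (le_lt_trans (ler_distD y _ _)) // (splitr e) ltrD. Qed.

Section NormedContinuity.
Variables (R : realType) (U V : normedModType R).

Lemma continuous_within_normP (A : set U) (f : U -> V) :
  {within A, continuous f} <->
  forall x, A x -> forall e, 0 < e -> exists2 d, 0 < d &
    forall y, A y -> `|x - y| < d -> `|f x - f y| < e.
Proof.
split => [/subspace_continuousP cf x Ax e e0|cf].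
  have /nbhs_ballP[d d0 fd] := cf x Ax _ (nbhsx_ballx (f x) _ e0).
  by exists d => // y Ay xy; have := fd y; rewrite -!ball_normE; apply.
apply/subspace_continuousP => x Ax P /nbhs_ballP[e e0 eP].
have [d d0 fd] := cf x Ax e e0; apply/nbhs_ballP; exists d => // y.
by rewrite -ball_normE => xy Ay; apply: eP; rewrite -ball_normE; exact: fd.
Qed.

Lemma continuous_compact_unif (A : set U) (f : U -> V) :
  compact A -> {within A, continuous f} -> forall e, 0 < e -> exists2 d, 0 < d &
    forall x y, A x -> A y -> `|x - y| < d -> `|f x - f y| < e.
Proof.
move=> /compact_near_coveringP/near_covering_withinP cA /continuous_within_normP cf e e0.
have [|N _ /(_ N (leqnn N)) HN] := cA nat \oo (fun k x => forall y, A y ->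
   `|x - y| < k.+1%:R^-1 -> `|f x - f y| < e).
  move=> x Ax; have [d d0 fd] := cf x Ax _ (divr_gt0 e0 (ltr0Sn _ 1)).
  have d2 : 0 < d / 2 by exact: divr_gt0.
  near=> x' k => /= Ax' y Ay x'y.
  have xx' : `|x - x'| < d / 2.
    by near: x'; apply/nbhs_normP; exists (d / 2).
  have k_small : k.+1%:R^-1 < d / 2 by near: k; exact: (near_infty_natSinv_lt (PosNum d2)).
  have fx' : `|f x - f x'| < e / 2 by apply: fd => //; lra.
  have fy : `|f x - f y| < e / 2.
    by apply: fd => //; apply: (lt_dist_split xx'); exact: lt_trans k_small.
  by apply: lt_dist_split fy; rewrite distrC.
by exists N.+1%:R^-1 => // x y Ax Ay; exact: HN.
Unshelve. all: by end_near. Qed.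

End NormedContinuity.

Lemma continuous_within_mxE (R : realType) (U : topologicalType) m n
  (A : set U) (F : U -> 'M[R]_(m, n)) i j :
  {within A, continuous F} -> {within A, continuous (fun x => F x i j)}.
Proof.
by move=> cF x; have h := continuous_comp (cF x) (@coord_continuous R m n i j (F x)).
Qed.

Lemma continuous_within_mx (R : realType) (U : topologicalType) m n
  (A : set U) (F : U -> 'M[R]_(m, n)) :
  (forall i j, {within A, continuous (fun x => F x i j)}) -> {within A, continuous F}.
Proof.
move=> cF x; apply/cvg_mx_entourageP => E entE.
apply: filter_forall => i; apply: filter_forall => j.
have /cvg_entourageP/(_ E entE) := cF i j x.
by apply: (filterS (Filter := nbhs_subspace_filter x)) => y /=; rewrite inE.
Qed.

Section MeasurableSets.
Context d (X : measurableType d).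

Lemma measurable_forall (I : countType) (P : I -> set X) :
  (forall i, measurable (P i)) -> measurable [set x | forall i, P i x].
Proof.
move=> mP; rewrite -[X in measurable X]setCK; apply: measurableC.
rewrite (_ : ~` _ = \bigcup_i ~` P i).
  by apply: countable_bigcupT_measurable => // i; exact: measurableC.
by apply/seteqP; split => x /= => [/existsNP[i Pi]|[i _ Pi] Px]; [exists i|apply/Pi].
Qed.

Lemma measurable_exists (I : countType) (P : I -> set X) :
  (forall i, measurable (P i)) -> measurable [set x | exists i, P i x].
Proof.
move=> mP; rewrite (_ : [set x | _] = \bigcup_i P i).
  exact: countable_bigcupT_measurable.
by apply/seteqP; split => x /= [i]; [exists i|exists i].
Qed.

Lemma measurable_implies (P : Prop) (A : set X) :
  (P -> measurable A) -> measurable [set x | P -> A x].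
Proof.
move=> mA; have [p|np] := pselect P.
  rewrite (_ : [set x | _] = A); first exact: mA.
  by apply/seteqP; split => x /=; [apply|move=> ? ?].
by rewrite (_ : [set x | _] = setT) //; apply/seteqP; split => x //= _ /np.
Qed.

Lemma measurable_pred (b : X -> bool) :
  measurable_fun setT b -> measurable [set x | b x].
Proof. by move=> mb; rewrite -[X in measurable X]setTI; exact: (mb _ [set true]). Qed.

Lemma measurable_eq_fun (R : realType) (f g : X -> R) :
  measurable_fun setT f -> measurable_fun setT g -> measurable [set x | f x = g x].
Proof.
move=> mf mg; rewrite (_ : [set x | _] = [set x | f x == g x]).
  exact/measurable_pred/measurable_fun_eqr.
by apply/seteqP; split => x /= /eqP.
Qed.

Lemma ae_probability1 (R : realType) (Q : probability X R) (E : set X) :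
  measurable E -> {ae Q, forall x, E x} -> Q E = 1%E.
Proof.
move=> mE [N [mN QN sN]].
have QEc : Q (~` E) = 0%E.
  by apply/eqP; rewrite eq_le measure_ge0 andbT -QN le_measure ?inE //; exact: measurableC.
by have := probability_setC Q (measurableC mE); rewrite setCK QEc sube0.
Qed.

End MeasurableSets.

Lemma compact_S2 (R : realType) (T : R) : compact (S2 T).
Proof.
apply: (@subclosed_compact _ _ (`[0, T] `*` `[0, T])).
- have -> : S2 T = fst @^-1` [set x | 0 <= x] `&`
      (fun p : R * R => p.2 - p.1) @^-1` [set x | 0 <= x] `&` snd @^-1` [set x | x <= T].
    by apply/seteqP; split => -[s t] /=; rewrite subr_ge0; [case=> ? []|case=> -[]].
  apply: closedI; [apply: closedI|].
  + by apply: preimage_closed; [move=> x _; exact: cvg_fst|exact: closed_ge].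
  + apply: preimage_closed; last exact: closed_ge.
    by move=> x _; apply: cvgB; [exact: cvg_snd|exact: cvg_fst].
  + by apply: preimage_closed; [move=> x _; exact: cvg_snd|exact: closed_le].
- by apply: compact_setX; exact: segment_compact.
- move=> [s t] [/= s0 [st tT]]; rewrite /= !in_itv /= s0 tT.
  by rewrite (le_trans st tT) (le_trans s0 st).
Qed.

Section DyadicGrid.
Variables (R : realType) (T : R).
Hypothesis hT : 0 < T.

Let pow2_gt0 n : 0 < (2 ^ n)%:R :> R.
Proof. by rewrite ltr0n expn_gt0. Qed.

Lemma dyad_ge0 n k : 0 <= dyad T n k.
Proof. by rewrite /dyad divr_ge0 ?mulr_ge0 ?ler0n ?(ltW hT) ?(ltW (pow2_gt0 _)). Qed.

Lemma ler_dyad n a b : (a <= b)%N -> dyad T n a <= dyad T n b.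
Proof. by move=> ab; rewrite /dyad ler_pM2r ?invr_gt0 // ler_pM2r // ler_nat. Qed.

Lemma dyad_leT n k : (k <= 2 ^ n)%N -> dyad T n k <= T.
Proof. by move=> kn; rewrite /dyad ler_pdivrMr // mulrC ler_pM2l // ler_nat. Qed.

Lemma dyadS n k : dyad T n k.+1 = dyad T n k + T / (2 ^ n)%:R.
Proof. by rewrite /dyad -natr1 !mulrDl mul1r. Qed.

Lemma dyad_mesh_small e : 0 < e -> \forall n \near \oo, T / (2 ^ n)%:R < e.
Proof.
move=> e0; exists (Num.truncn (e^-1 * T)).+1 => // n /= Nn.
rewrite ltr_pdivrMr // -ltr_pdivrMl //; apply: lt_le_trans (truncnS_gt _) _.
by rewrite ler_nat (leq_trans Nn) // ltnW // ltn_expl.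
Qed.

Definition dyad_floor n (s : R) : nat := Num.truncn (s * (2 ^ n)%:R / T).

Lemma dyad_floor_le n s : 0 <= s -> dyad T n (dyad_floor n s) <= s.
Proof.
move=> s0; rewrite /dyad /dyad_floor ler_pdivrMr // -ler_pdivlMr //.
by rewrite truncn_le divr_ge0 ?mulr_ge0 ?ler0n ?(ltW hT).
Qed.

Lemma lt_dyad_floorS n s : 0 <= s -> s < dyad T n (dyad_floor n s).+1.
Proof.
move=> s0; rewrite /dyad /dyad_floor ltr_pdivlMr // -ltr_pdivrMr //.
exact: truncnS_gt.
Qed.

Lemma le_dyad_floor n s t : s <= t -> (dyad_floor n s <= dyad_floor n t)%N.
Proof. by move=> st; apply: le_truncn; rewrite ler_pM2r ?invr_gt0 // ler_pM2r. Qed.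

Lemma dyad_floor_le_exp n t : t <= T -> (dyad_floor n t <= 2 ^ n)%N.
Proof.
move=> tT; rewrite /dyad_floor truncn_le_nat ltr_pdivrMr //.
rewrite (@le_lt_trans _ _ (T * (2 ^ n)%:R)) ?ler_pM2r //.
by rewrite mulrC ltr_pM2r // ltr_nat.
Qed.

Lemma dist_dyad_floor n s :
  0 <= s -> `|s - dyad T n (dyad_floor n s)| < T / (2 ^ n)%:R.
Proof.
move=> s0; rewrite ger0_norm ?subr_ge0 ?dyad_floor_le // ltrBlDl -dyadS.
exact: lt_dyad_floorS.
Qed.

Definition dyadic (p : R * R) : Prop :=
  exists n a b, (a <= b <= 2 ^ n)%N /\ p = (dyad T n a, dyad T n b).

Lemma dyadic_S2 p : dyadic p -> S2 T p.
Proof.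
move=> [n [a [b [/andP[ab bn] ->]]]].
by split; [exact: dyad_ge0|split; [exact: ler_dyad|exact: dyad_leT]].
Qed.

Definition dyad_below n (p : R * R) : R * R :=
  (dyad T n (dyad_floor n p.1), dyad T n (dyad_floor n p.2)).

Lemma dyadic_dyad_below n p : S2 T p -> dyadic (dyad_below n p).
Proof.
move=> [_ [st tT]]; exists n, (dyad_floor n p.1), (dyad_floor n p.2); split => //.
by rewrite le_dyad_floor // dyad_floor_le_exp.
Qed.

Lemma dyad_below_cvg p : S2 T p -> dyad_below n p @[n --> \oo] --> p.
Proof.
case: p => s t [/= s0 [st _]]; have t0 := le_trans s0 st.
apply/cvgrPdist_lt => e e0; near=> n.
have mesh : T / (2 ^ n)%:R < e by near: n; exact: dyad_mesh_small.
rewrite prod_normE /= gt_max.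
by rewrite !(lt_trans (dist_dyad_floor _ _) mesh).
Unshelve. all: by end_near. Qed.

End DyadicGrid.

Section DyadicExtension.
Variables (R : realType) (T : R).
Hypothesis hT : 0 < T.

(* Uniform continuity on the dyadic points, with tolerances 1/(k+1) so that
   it defines a measurable set of parameters. *)
Definition dyad_ucont (f : R * R -> R) : Prop :=
  forall k : nat, exists l : nat, forall p, dyadic T p -> forall q, dyadic T q ->
    `|p - q| < l.+1%:R^-1 -> `|f p - f q| <= k.+1%:R^-1.

Lemma dyad_ucontP f : dyad_ucont f -> forall e, 0 < e -> exists2 d, 0 < d &
  forall p q, dyadic T p -> dyadic T q -> `|p - q| < d -> `|f p - f q| < e.
Proof.
move=> uf e e0; have [k _ /(_ k (leqnn k)) ke] := near_infty_natSinv_lt (PosNum e0).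
have [l fl] := uf k; exists l.+1%:R^-1 => // p q Dp Dq pq.
exact: le_lt_trans (fl p Dp q Dq pq) ke.
Qed.

Lemma eq_dyad_ucont f g :
  (forall p, dyadic T p -> f p = g p) -> dyad_ucont g -> dyad_ucont f.
Proof.
by move=> fg ug k; have [l gl] := ug k; exists l => p Dp q Dq; rewrite !fg //; exact: gl.
Qed.

Lemma continuous_dyad_ucont g : {within S2 T, continuous g} -> dyad_ucont g.
Proof.
move=> cg k; have k0 : 0 < k.+1%:R^-1 :> R by rewrite invr_gt0.
have [d d0 gd] := continuous_compact_unif (@compact_S2 _ T) cg k0.
have [l _ /(_ l (leqnn l)) ld] := near_infty_natSinv_lt (PosNum d0).
exists l => p Dp q Dq pq; apply/ltW; apply: gd; try exact: dyadic_S2.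
exact: lt_trans ld.
Qed.

Definition dyad_ext (f : R * R -> R) (p : R * R) : R :=
  limsupr (fun n => f (dyad_below T n p)).

Let dyad_below_near p e : S2 T p -> 0 < e ->
  \forall n \near \oo, `|p - dyad_below T n p| < e.
Proof. by move=> Sp e0; exact: ((cvgrPdist_lt _ _).1 (dyad_below_cvg hT Sp) _ e0). Qed.

Lemma dyad_ext_id f g p : {within S2 T, continuous g} ->
  (forall q, dyadic T q -> f q = g q) -> S2 T p -> dyad_ext f p = g p.
Proof.
move=> /continuous_within_normP cg fg Sp; apply: limsuprE.
rewrite (_ : (fun n => _) = (fun n => g (dyad_below T n p))); last first.
  by apply/funext => n; apply: fg; exact: dyadic_dyad_below.
apply/cvgrPdist_lt => e e0; have [d d0 gd] := cg p Sp e e0.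
near=> n; apply: gd; first exact/dyadic_S2/dyadic_dyad_below.
by near: n; exact: dyad_below_near.
Unshelve. all: by end_near. Qed.

Lemma eq_S2_dyadic (g h : R * R -> R) :
  {within S2 T, continuous g} -> {within S2 T, continuous h} ->
  (forall p, dyadic T p -> g p = h p) -> forall p, S2 T p -> g p = h p.
Proof.
move=> cg ch gh p Sp; rewrite -(dyad_ext_id ch gh Sp).
by rewrite (@dyad_ext_id g g p cg (fun _ _ => erefl) Sp).
Qed.

Lemma measurable_forall_dyadic d (X : measurableType d) (A : R * R -> set X) :
  (forall p, dyadic T p -> measurable (A p)) ->
  measurable [set x | forall p, dyadic T p -> A p x].
Proof.
move=> mA; rewrite (_ : [set x | _] = [set x | forall n a b : nat,
    (a <= b <= 2 ^ n)%N -> A (dyad T n a, dyad T n b) x]).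
  do 3 apply: measurable_forall => ?; apply: measurable_implies => ab.
  by apply: mA; do 3 eexists; split; first exact: ab.
apply/seteqP; split => x /= Ax; first by move=> n a b ab; apply: Ax; exists n, a, b.
by move=> _ [n [a [b [ab ->]]]]; exact: Ax.
Qed.

Lemma measurable_dyad_ucont d (X : measurableType d) (F : X -> R * R -> R) :
  (forall p, measurable_fun setT (F ^~ p)) -> measurable [set x | dyad_ucont (F x)].
Proof.
move=> mF; apply: measurable_forall => k; apply: measurable_exists => l.
apply: measurable_forall_dyadic => p _; apply: measurable_forall_dyadic => q _.
apply: measurable_implies => _; apply: measurable_pred.
apply: measurable_fun_ler; last exact: measurable_cst.
by apply: measurableT_comp; [exact: normr_measurable|exact: measurable_funB].
Qed.

Section UniformlyContinuousOnDyadics.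
Variable f : R * R -> R.
Hypothesis uf : dyad_ucont f.

Lemma dyad_ext_cvg p : S2 T p -> f (dyad_below T n p) @[n --> \oo] --> dyad_ext f p.
Proof.
move=> Sp; suff cf : cvgn (fun n => f (dyad_below T n p)).
  by rewrite /dyad_ext (limsuprE cf).
apply/cauchy_cvgP/cauchy_exP => e e0; have [d d0 fd] := dyad_ucontP uf e0.
have [K _ pK] := dyad_below_near Sp (divr_gt0 d0 (ltr0Sn _ 1)).
exists (f (dyad_below T K p)), K => // n /= Kn; rewrite -ball_normE /=.
apply: fd; try exact: dyadic_dyad_below.
apply: (@lt_dist_split _ _ _ p); last exact: (pK n Kn).
by rewrite distrC; exact: (pK K (leqnn K)).
Qed.

Lemma dyad_ext_ucont e : 0 < e -> exists2 d, 0 < d & forall p q, S2 T p -> S2 T q ->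
  `|p - q| < d -> `|dyad_ext f p - dyad_ext f q| < e.
Proof.
move=> e0; have e3 : 0 < e / 3 by exact: divr_gt0.
have [d d0 fd] := dyad_ucontP uf e3.
exists (d / 2) => [|p q Sp Sq pq]; first exact: divr_gt0.
have d4 : 0 < d / 4 by exact: divr_gt0.
near \oo => n.
have extp : `|dyad_ext f p - f (dyad_below T n p)| < e / 3.
  by near: n; apply: (cvgrPdist_lt _ _).1 e3; exact: dyad_ext_cvg.
have extq : `|dyad_ext f q - f (dyad_below T n q)| < e / 3.
  by near: n; apply: (cvgrPdist_lt _ _).1 e3; exact: dyad_ext_cvg.
have np : `|p - dyad_below T n p| < d / 4 by near: n; exact: dyad_below_near Sp d4.
have nq : `|q - dyad_below T n q| < d / 4 by near: n; exact: dyad_below_near Sq d4.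
have fpq : `|f (dyad_below T n p) - f (dyad_below T n q)| < e / 3.
  apply: fd; try exact: dyadic_dyad_below.
  have := ler_distD p (dyad_below T n p) (dyad_below T n q).
  have := ler_distD q p (dyad_below T n q).
  rewrite distrC in np; lra.
have := ler_distD (f (dyad_below T n p)) (dyad_ext f p) (f (dyad_below T n q)).
have := ler_distD (f (dyad_below T n q)) (dyad_ext f p) (dyad_ext f q).
rewrite distrC in extq; lra.
Unshelve. all: by end_near. Qed.

Lemma continuous_dyad_ext : {within S2 T, continuous (dyad_ext f)}.
Proof.
apply/continuous_within_normP => p Sp e e0; have [d d0 fd] := dyad_ext_ucont e0.
by exists d => // q Sq; exact: fd.
Qed.

End UniformlyContinuousOnDyadics.

End DyadicExtension.

Section UniformRSSums.
Variable R : realType.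

Definition unif_point (a b : R) (N k : nat) : R := a + k%:R * (b - a) / N%:R.

Definition unif_RS_sum (f g : R -> R) (a b : R) (N : nat) : R :=
  \sum_(k < N) f (unif_point a b N k) *
    (g (unif_point a b N k.+1) - g (unif_point a b N k)).

Lemma unif_pointS a b N k : (0 < N)%N ->
  unif_point a b N k.+1 - unif_point a b N k = (b - a) / N%:R.
Proof. by move=> N0; rewrite /unif_point -natr1; ring. Qed.

Lemma is_RS_integral_cvg f g a b I : a <= b -> is_RS_integral f g a b I ->
  unif_RS_sum f g a b N @[N --> \oo] --> I.
Proof.
move=> ab fgI; apply/cvgrPdist_lt => e e0; have [d d0 Hd] := fgI e e0.
exists (Num.truncn ((b - a) / d)).+1 => // N /= hN; have N0 : (0 < N)%N by case: N hN.
rewrite distrC; apply: Hd => [||k _].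
- by rewrite /unif_point !mul0r addr0.
- by rewrite /unif_point mulrAC divff ?mul1r ?subrKC // pnatr_eq0 -lt0n.
rewrite lexx /= -subr_ge0 unif_pointS // divr_ge0 ?subr_ge0 //; split => //.
rewrite ltr_pdivrMr ?ltr0n // -ltr_pdivrMl //; apply: lt_le_trans (truncnS_gt _) _.
by rewrite mulrC ler_nat.
Qed.

End UniformRSSums.

Section IteratedIntegralMap.
Variables (R : realType) (T : R) (m : nat).
Hypothesis hT : 0 < T.

Local Notation CP := (cpathM T m).

Lemma measurable_path_eval t i :
  0 <= t <= T -> measurable_fun setT (fun u : CP => sval u t ord0 i).
Proof. by move=> tT _ B mB; rewrite setTI; apply: sub_sigma_algebra; exists t, i, B. Qed.

Lemma measurable_interp n r i :
  measurable_fun setT (fun u : CP => interp T n (sval u) r ord0 i).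
Proof.
rewrite /interp; case: (r == T).
  by apply: measurable_path_eval; rewrite lexx (ltW hT).
under eq_fun do rewrite summxE.
apply: measurable_sum => k; case: (_ && _); last exact: measurable_cst.
under eq_fun do rewrite !mxE.
have k0 : 0 <= dyad T n k <= T by rewrite dyad_ge0 // dyad_leT // ltnW.
have k1 : 0 <= dyad T n k.+1 <= T by rewrite dyad_ge0 // dyad_leT.
apply: measurable_funD; first exact: measurable_path_eval.
apply: measurable_funM; first exact: measurable_cst.
by apply: measurable_funB; exact: measurable_path_eval.
Qed.

(* [w.1] plays the role of W^2 and [w.2] that of W^1.  Whenever the
   Riemann-Stieltjes integral of the statement exists, it is the limit of the
   uniform sums used here. *)
Definition approx_iint n s t i j (w : CP * CP) : R :=
  limsupr (unif_RS_sum
    (fun r => interp T n (sval w.1) r ord0 i - interp T n (sval w.1) s ord0 i)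
    (fun r => interp T n (sval w.2) r ord0 j) s t).

Definition iint i j (w : CP * CP) (p : R * R) : R :=
  limsupr (fun n => approx_iint n p.1 p.2 i j w).

Lemma measurable_iint i j p : measurable_fun setT (iint i j ^~ p).
Proof.
apply: (measurable_limsupr (u := fun n w => approx_iint n p.1 p.2 i j w)) => n.
apply: (measurable_limsupr (u := fun N w => unif_RS_sum _ _ _ _ N)) => N.
apply: measurable_sum => k; apply: measurable_funM; apply: measurable_funB;
  apply: measurableT_comp (measurable_interp _ _ _) _;
  first [exact: measurable_fst|exact: measurable_snd].
Qed.

Definition dyad_regular : set (CP * CP) := [set w | forall i j, dyad_ucont T (iint i j w)].

Lemma measurable_dyad_regular : measurable dyad_regular.
Proof.
apply: measurable_forall => i; apply: measurable_forall => j.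
by apply: measurable_dyad_ucont; exact: measurable_iint.
Qed.

Definition iint_mx (w : CP * CP) (p : R * R) : 'M[R]_m :=
  \matrix_(i, j) dyad_ext T (iint i j w) p.

Lemma continuous_iint_mx w : dyad_regular w -> {within S2 T, continuous (iint_mx w)}.
Proof.
move=> rw; apply: continuous_within_mx => i j.
rewrite (_ : (fun p => _) = dyad_ext T (iint i j w)); last by apply/funext => p; rewrite mxE.
exact: continuous_dyad_ext.
Qed.

Definition iint_map (w : CP * CP) : c2pathM T m :=
  match pselect (dyad_regular w) with
  | left rw => exist _ (iint_mx w) (continuous_iint_mx rw)
  | right _ => exist _ (fun _ => 0) (@cst_c2path R T m)
  end.

Lemma iint_mapE w p i j : sval (iint_map w : c2path T m) p i j =
  if `[< dyad_regular w >] then dyad_ext T (iint i j w) p else 0.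
Proof.
by rewrite /iint_map; case: pselect => rw /=; [rewrite asboolT|rewrite asboolF]; rewrite ?mxE.
Qed.

Lemma measurable_iint_map : measurable_fun setT iint_map.
Proof.
apply: (@measurability _ _ _ _ setT iint_map (@c2path_gens R T m)) => //.
move=> _ [A [p [i [j [B [Sp mB ->]]]]] <-].
rewrite (_ : _ `&` _ = dyad_regular `&` [set w | B (dyad_ext T (iint i j w) p)]
                   `|` ~` dyad_regular `&` [set w | B 0]).
  apply: measurableU; apply: measurableI.
  - exact: measurable_dyad_regular.
  - rewrite -[X in measurable X]setTI; apply: (measurable_limsupr _) => // n.
    exact: measurable_iint.
  - exact: measurableC measurable_dyad_regular.
  - have [B0|nB0] := pselect (B 0).
      by rewrite (_ : [set w | B 0] = setT) //; apply/seteqP; split.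
    by rewrite (_ : [set w | B 0] = set0) //; apply/seteqP; split.
apply/seteqP; split => w /=; rewrite iint_mapE; case: asboolP => rw.
- by move=> [_ Bw]; left.
- by move=> [_ Bw]; right.
- by move=> [[_ Bw]|[]].
- by move=> [[]|[_ Bw]].
Qed.

End IteratedIntegralMap.

Section PathwiseIdentification.
Variables (R : realType) (T : R) (m : nat).
Hypothesis hT : 0 < T.
Variables (V1 V2 : R -> 'rV[R]_m) (V21 : R -> R -> 'M[R]_m).
Hypotheses (cV1 : {within `[0, T], continuous V1})
  (cV2 : {within `[0, T], continuous V2})
  (cV21 : {within S2 T, continuous (fun p => V21 p.1 p.2)}).
Hypothesis V21_lim : forall s t, S2 T (s, t) -> forall i j : 'I_m,
  exists J : nat -> R,
    (forall n, is_RS_integral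
       (fun r => interp T n V2 r ord0 i - interp T n V2 s ord0 i)
       (fun r => interp T n V1 r ord0 j) s t (J n))
    /\ J @ \oo --> V21 s t i j.

Let w : cpathM T m * cpathM T m :=
  (exist _ V2 cV2 : cpath T m, exist _ V1 cV1 : cpath T m).

Let cV21_entry i j : {within S2 T, continuous (fun p => V21 p.1 p.2 i j)}.
Proof. exact: (continuous_within_mxE (F := fun p => V21 p.1 p.2)). Qed.

Lemma iint_paths i j p : S2 T p -> iint i j w p = V21 p.1 p.2 i j.
Proof.
case: p => s t Sst; have [J [JRS JV21]] := V21_lim Sst i j.
have st : s <= t by case: Sst => _ [].
rewrite /iint (_ : (fun n => _) = J); first exact: limsuprE.
by apply/funext => n; apply: limsuprE; exact: is_RS_integral_cvg (JRS n).
Qed.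

Lemma dyad_regular_paths : dyad_regular w.
Proof.
move=> i j; apply: (eq_dyad_ucont (g := fun p => V21 p.1 p.2 i j)).
  by move=> p Dp; apply: iint_paths; exact: dyadic_S2.
exact: continuous_dyad_ucont.
Qed.

Lemma iint_map_paths p : S2 T p -> sval (iint_map hT w : c2path T m) p = V21 p.1 p.2.
Proof.
move=> Sp; apply/matrixP => i j; rewrite iint_mapE asboolT; last exact: dyad_regular_paths.
apply: (dyad_ext_id hT (@cV21_entry i j)) => // q Dq.
by apply: iint_paths; exact: dyadic_S2.
Qed.

End PathwiseIdentification.

Section Packaging.
Variables (R : realType) (T : R) (m : nat).
Hypothesis hT : 0 < T.
Context d (Xi : measurableType d).

Lemma measurable_c2path_eval p i j :
  S2 T p -> measurable_fun setT (fun g : c2pathM T m => sval g p i j).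
Proof. by move=> Sp _ B mB; rewrite setTI; apply: sub_sigma_algebra; exists p, i, j, B. Qed.

Lemma measurable_cpath_of (V : Xi -> R -> 'rV[R]_m)
  (cV : forall xi, {within `[0, T], continuous (V xi)}) :
  (forall t i, 0 <= t <= T -> measurable_fun setT (fun xi => V xi t ord0 i)) ->
  measurable_fun setT (fun xi => exist _ (V xi) (cV xi) : cpathM T m).
Proof.
move=> mV; apply: (@measurability _ _ Xi (cpathM T m) setT _ (@cpath_gens R T m)) => //.
by move=> _ [A [t [i [B [tT mB ->]]]] <-]; exact: (mV t i tT measurableT B mB).
Qed.

Lemma measurable_c2path_of (V : Xi -> R -> R -> 'M[R]_m)
  (cV : forall xi, {within S2 T, continuous (fun p => V xi p.1 p.2)}) :
  (forall s t i j, S2 T (s, t) -> measurable_fun setT (fun xi => V xi s t i j)) ->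
  measurable_fun setT (fun xi => exist _ _ (cV xi) : c2pathM T m).
Proof.
move=> mV; apply: (@measurability _ _ Xi (c2pathM T m) setT _ (@c2path_gens R T m)) => //.
by move=> _ [A [[s t] [i [j [B [Sp mB ->]]]]] <-]; exact: (mV s t i j Sp measurableT B mB).
Qed.

Lemma measurable_eq_c2path (F G : Xi -> c2pathM T m) :
  measurable_fun setT F -> measurable_fun setT G ->
  measurable [set xi | forall p, S2 T p -> sval (F xi : c2path T m) p = sval (G xi) p].
Proof.
move=> mF mG; rewrite (_ : [set xi | _] = [set xi | forall p, dyadic T p ->
    forall i j, sval (F xi : c2path T m) p i j = sval (G xi : c2path T m) p i j]).
  apply: measurable_forall_dyadic => p Dp.
  apply: measurable_forall => i; apply: measurable_forall => j.
  have Sp := dyadic_S2 hT Dp.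
  have evp := measurable_c2path_eval i j Sp.
  exact: measurable_eq_fun (measurableT_comp evp mF) (measurableT_comp evp mG).
apply/seteqP; split => xi /= FG; first by move=> p /(dyadic_S2 hT)/FG ->.
move=> p Sp; apply/matrixP => i j; move: p Sp; apply: eq_S2_dyadic => //.
- exact: continuous_within_mxE (svalP (F xi)).
- exact: continuous_within_mxE (svalP (G xi)).
- by move=> p /FG.
Qed.

End Packaging.

Theorem proposition17
  (R : realType) (T : R) (m : nat) (q : R)
  (d : measure_display) (Xi : measurableType d) (Q : probability Xi R)
  (W1 W2 : Xi -> R -> 'rV[R]_m)
  (W11 W12 W21 W22 : Xi -> R -> R -> 'M[R]_m)
  (hT : 0 < T) (hm : (1 <= m)%N) (hq : 1 <= q)
  (* measurability (the W's are random variables) *)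
  (mW1 : forall t (i : 'I_m), 0 <= t <= T ->
     measurable_fun setT (fun xi => W1 xi t ord0 i))
  (mW2 : forall t (i : 'I_m), 0 <= t <= T ->
     measurable_fun setT (fun xi => W2 xi t ord0 i))
  (mW11 : forall s t (i j : 'I_m), S2 T (s, t) ->
     measurable_fun setT (fun xi => W11 xi s t i j))
  (mW12 : forall s t (i j : 'I_m), S2 T (s, t) ->
     measurable_fun setT (fun xi => W12 xi s t i j))
  (mW21 : forall s t (i j : 'I_m), S2 T (s, t) ->
     measurable_fun setT (fun xi => W21 xi s t i j))
  (mW22 : forall s t (i j : 'I_m), S2 T (s, t) ->
     measurable_fun setT (fun xi => W22 xi s t i j))
  (* continuous trajectories *)
  (cW1 : forall xi, {within `[0, T], continuous (W1 xi)})
  (cW2 : forall xi, {within `[0, T], continuous (W2 xi)})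
  (cW11 : forall xi, {within S2 T, continuous (fun p => W11 xi p.1 p.2)})
  (cW12 : forall xi, {within S2 T, continuous (fun p => W12 xi p.1 p.2)})
  (cW21 : forall xi, {within S2 T, continuous (fun p => W21 xi p.1 p.2)})
  (cW22 : forall xi, {within S2 T, continuous (fun p => W22 xi p.1 p.2)})
  (* W1 and W2 independent and identically distributed *)
  (indW : indep_sigma Q (gens_path T W1) (gens_path T W2))
  (idW : forall A : set (R -> 'rV[R]_m), path_sigma T A -> Q (W1 @^-1` A) = Q (W2 @^-1` A))
  (* moment conditions *)
  (momW1 : (\int[Q]_xi ereal_sup
              [set ((`|W1 xi t|) `^ q)%:E | t in `[0%R, T]] < +oo)%E)
  (momW : forall W, [\/ W = W11, W = W12, W = W21 | W = W22] ->
     (\int[Q]_xi ereal_sup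
        [set ((`|W xi p.1 p.2|) `^ q)%:E | p in S2 T] < +oo)%E)
  (* (W1, W11) independent of W2 *)
  (indW11 : indep_sigma Q (gens_path T W1 `|` gens_2path T W11) (gens_path T W2))
  (* Chen's relation, a.s. *)
  (hchen : {ae Q, forall xi,
     [/\ chen T (W1 xi) (W1 xi) (W11 xi), chen T (W1 xi) (W2 xi) (W12 xi),
         chen T (W2 xi) (W1 xi) (W21 xi) & chen T (W2 xi) (W2 xi) (W22 xi)]})
  (* W21 is a.s. the limit of the integrals along dyadic interpolations *)
  (hlim : {ae Q, forall xi, forall s t, S2 T (s, t) -> forall i j : 'I_m,
     exists J : nat -> R,
       (forall n, is_RS_integral
          (fun r => interp T n (W2 xi) r ord0 i - interp T n (W2 xi) s ord0 i)
          (fun r => interp T n (W1 xi) r ord0 j) s t (J n))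
       /\ J @ \oo --> W21 xi s t i j}) :
  exists I : cpathM T m * cpathM T m -> c2pathM T m,
    measurable_fun setT I /\
    let E := [set xi | forall s t, S2 T (s, t) ->
       W21 xi s t = sval (I (exist _ (W2 xi) (cW2 xi) : cpath T m,
                              exist _ (W1 xi) (cW1 xi) : cpath T m)) (s, t)] in
    measurable E /\ Q E = 1%E.
Proof.
set path_pair := fun xi => (exist _ (W2 xi) (cW2 xi) : cpath T m,
                           exist _ (W1 xi) (cW1 xi) : cpath T m).
have mpaths : measurable_fun setT (path_pair : Xi -> cpathM T m * cpathM T m).
  by apply: measurable_fun_pair; exact: measurable_cpath_of.
exists (iint_map hT); split; first exact: measurable_iint_map.
move=> E; have mE : measurable E.
  have := measurable_eq_c2path hT (measurable_c2path_of cW21 mW21)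
    (measurableT_comp (measurable_iint_map hT) mpaths).
  congr measurable; apply/seteqP; split => xi /= EW21 => [s t|[s t]]; exact: EW21.
split => //; apply: ae_probability1 mE _.
apply: filterS hlim => xi W21_lim s t Sst.
by rewrite (iint_map_paths hT (cW1 xi) (cW2 xi) (cW21 xi) W21_lim Sst).
Qed.
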